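(* Let $n$ be even, $V=V_1\sqcup V_2$ with $|V_1|=|V_2|=n/2$, and $0\le q<p\le 1$. Consider the complete weighted graph on $V$ with $w(u,v)=p$ for distinct $u,v$ in the same block, $w(u,v)=q$ for $u,v$ in different blocks, and $w(v,v)=0$. Let $\mathcal P$ be the set of all cuts $\{A,A^\complement\}$ with $A\subseteq V$, with cost $c(\{A,A^\complement\})=\sum_{u\in A,v\in A^\complement}w(u,v)$, and for $\Psi\in\mathbb R$ let $\mathcal P_\Psi=\{P\in\mathcal P: c(P)\le\Psi\}$. Let $a\in\mathbb N$ be the agreement parameter, and assume $a\ge 2$ and $p>3qn/(n-2a)$. Let $\xi=1+q/p$. If $$q\Bigl(\frac n2\Bigr)^2\le\Psi<\frac{n^2}{4}\,p\Bigl(\frac13\xi\Bigl(\xi-\frac{2a}{n}\Bigr)-\frac19\Bigl(\xi-\frac{2a}{n}\Bigr)^2\Bigr),$$ then the two orientations of $\mathcal P_\Psi$ induced by the blocks $V_1$ and $V_2$ are distinct, and they are exactly the $\mathcal P_\Psi$-tangles.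
   Context: An orientation of a set of cuts chooses one side of every cut in it. An orientation $O$ of $\mathcal P_\Psi$ is a $\mathcal P_\Psi$-tangle if for all (not necessarily distinct) chosen sides $A,B,C\in O$ we have $|A\cap B\cap C|\ge a$. The orientation induced by block $V_i$ picks from every cut $\{A,A^\complement\}$ the side containing the majority of the vertices of $V_i$. *)

From HB Require Import structures.
From mathcomp Require Import all_boot all_order all_algebra.
Set Implicit Arguments. Unset Strict Implicit. Unset Printing Implicit Defensive.
Import Order.TTheory GRing.Theory Num.Theory.
Local Open Scope ring_scope.

Section Defs.
Variables (R : realFieldType) (T : finType) (V1 : {set T}) (p q : R).

Definition wgt (u v : T) : R :=
  if u == v then 0 else if (u \in V1) == (v \in V1) then p else q.

Definition cut_cost (A : {set T}) : R :=
  \sum_(u in A) \sum_(v in ~: A) wgt u v.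

Variable Psi : R.

(* an orientation of P_Psi, represented as the set of chosen sides:
   only sides of cuts in P_Psi are chosen, and of every cut {A, ~:A}
   in P_Psi exactly one side is chosen *)
Definition is_orientation (O : {set {set T}}) : Prop :=
  (forall A, A \in O -> cut_cost A <= Psi) /\
  (forall A, cut_cost A <= Psi -> (A \in O) != (~: A \in O)).

Definition is_tangle (a : nat) (O : {set {set T}}) : Prop :=
  is_orientation O /\
  (forall A B C, A \in O -> B \in O -> C \in O -> (a <= #|A :&: B :&: C|)%N).

Definition induced (Vi : {set T}) : {set {set T}} :=
  [set A : {set T} | (cut_cost A <= Psi) && (#|Vi| < 2 * #|A :&: Vi|)%N].

End Defs.

From HB Require Import structures.
From mathcomp Require Import all_boot all_order all_algebra.
From mathcomp Require Import zify ring lra.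
Import Order.TTheory GRing.Theory Num.Theory.
Local Open Scope ring_scope.
Set Implicit Arguments. Unset Strict Implicit. Unset Printing Implicit Defensive.

(* Write M = #|V1| = n/2, r = q/p and c = (M (1 + r) - a)/3.  A cut whose side A has
   k vertices in V1 and l outside costs p (k (M - k) + l (M - l)) + q (k (M - l) + l (M - k)),
   which is concave in l; comparing it with the upper bound on Psi shows that every cut in
   P_Psi has a side containing more than half of V1 that either misses fewer than c vertices
   of V or differs from V1 in fewer than c - r M vertices.  Counting missed vertices inside V1
   and inside V, three such sides always share more than a vertices, so both blocks induce
   tangles; the lower bound on Psi puts {V1, V2} in P_Psi, so they differ.  Conversely, if a
   tangle containing V1 also contained a side A with at most half of V1, it would contain
   A :&: V1, all of whose subsets are cheap; removing one vertex at a time then leads to a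
   singleton, which has fewer than a vertices. *)

Lemma concave_quadratic_ge (R : realFieldType) (al be B y1 y2 y : R) :
  y1 <= y -> y <= y2 ->
  B <= - y1 ^+ 2 + al * y1 + be -> B <= - y2 ^+ 2 + al * y2 + be ->
  B <= - y ^+ 2 + al * y + be.
Proof.
move=> y1y yy2 B1 B2.
have [e|y1y2] := eqVneq y1 y2.
  by have -> : y = y1 by apply/eqP; rewrite eq_le y1y e yy2.
have d_gt0 : 0 < y2 - y1 by rewrite subr_gt0 lt_neqAle y1y2 (le_trans y1y yy2).
rewrite -(ler_pM2l d_gt0).
have -> : (y2 - y1) * (- y ^+ 2 + al * y + be) =
   (y2 - y) * (- y1 ^+ 2 + al * y1 + be) + (y - y1) * (- y2 ^+ 2 + al * y2 + be)
   + (y2 - y1) * ((y - y1) * (y2 - y)) by ring.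
have : 0 <= (y2 - y1) * ((y - y1) * (y2 - y)) by rewrite !mulr_ge0 //; lra.
have : (y2 - y) * B <= (y2 - y) * (- y1 ^+ 2 + al * y1 + be) by rewrite ler_wpM2l // subr_ge0.
have : (y - y1) * B <= (y - y1) * (- y2 ^+ 2 + al * y2 + be) by rewrite ler_wpM2l // subr_ge0.
nra.
Qed.

Lemma two_block_cost_ge (R : realFieldType) (M r c k l : R) :
  0 <= r -> r <= 1 -> 2 * c <= M -> M <= 2 * k -> k <= M -> 0 <= l -> l <= M ->
  c <= (M - k) + (M - l) -> c - r * M <= (M - k) + l ->
  c * (M + r * M - c) <= k * (M - k) + l * (M - l) + r * (k * (M - l) + l * (M - k)).
Proof.
(* The right-hand side is a concave quadratic in l, and the last two hypotheses confine l
   to an interval on whose endpoints the bound is checked directly. *)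
move=> r0 r1 cM Mk kM l0 lM far1 far2.
pose al := M - r * k + r * (M - k).
pose be := k * (M - k) + r * k * M.
have gE y : k * (M - k) + y * (M - y) + r * (k * (M - y) + y * (M - k))
    = - y ^+ 2 + al * y + be by rewrite /al /be; ring.
rewrite gE; apply: (@concave_quadratic_ge _ _ _ _ (Num.max 0 (c - r * M - (M - k)))
                                           (Num.min M (2 * M - k - c))).
- by rewrite ge_max l0; lra.
- by rewrite le_min lM; lra.
- rewrite -gE; case: (leP 0 (c - r * M - (M - k))) => hs.
    have : 0 <= (M - k) * (c - r * M - (M - k)) * (1 + r) by rewrite !mulr_ge0 //; lra.
    nra.
  have : 0 <= (M - k - (c - r * M)) * (k - c) by rewrite mulr_ge0 //; lra.
  nra.
- rewrite -gE; case: (leP M (2 * M - k - c)) => hs.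
    have : 0 <= (M - k - c) * (k + r * M - c) by rewrite mulr_ge0 //; nra.
    nra.
  have : 0 <= (M - k) * (c - (M - k)) * (1 - r) by rewrite !mulr_ge0 //; lra.
  nra.
Qed.

Lemma threshold_parameters (R : realFieldType) (M p q Psi a : R) :
  0 <= M -> 0 <= a -> 0 <= q -> q < p ->
  3 * q * (M + M) / (M + M - 2 * a) < p ->
  q * M ^+ 2 <= Psi ->
  Psi < (M + M) ^+ 2 / 4 * p *
          (3^-1 * (1 + q / p) * (1 + q / p - 2 * a / (M + M))
           - 9^-1 * (1 + q / p - 2 * a / (M + M)) ^+ 2) ->
  let c := (M + q / p * M - a) / 3 in
  2 * c <= M /\ Psi < p * (c * (M + q / p * M - c)).
Proof.
move=> M_ge0 a_ge0 q_ge0 q_lt_p p_big Psi_ge Psi_lt c.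
have p_gt0 : 0 < p by lra.
set r := q / p in Psi_lt c *.
have qE : q = p * r by rewrite /r mulrC divfK ?gt_eqF.
have r_ge0 : 0 <= r by rewrite divr_ge0 // ltW.
have r_le1 : r <= 1 by rewrite ler_pdivrMr // mul1r ltW.
have M_gt0 : 0 < M.
  rewrite lt_def M_ge0 andbT; apply: contraTneq Psi_lt => M0.
  by move: Psi_ge; rewrite M0 addr0 expr0n /= mulr0 !mul0r -leNgt.
rewrite (_ : (M + M) ^+ 2 / 4 * p * _ = p * (c * (M + r * M - c))) in Psi_lt; last first.
  by rewrite /c; field; rewrite ?gt_eqF ?addr_gt0.
have cE : 3 * c = M + r * M - a by rewrite /c mulrC divfK ?pnatr_eq0.
have rM_ge0 : 0 <= r * M by rewrite mulr_ge0 // ltW.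
(* Otherwise c <= r M / 3 and the upper bound on Psi would fall below the lower one. *)
have a_lt_M : a < M.
  rewrite ltNge; apply/negP => M_le_a.
  suff : c * (M + r * M - c) <= r * M ^+ 2.
    by move=> /(ler_wpM2l (ltW p_gt0)); rewrite [p * (r * _)]mulrA -qE; lra.
  have : 0 <= r * M * (M - r * M) by rewrite mulr_ge0 //; nra.
  case: (leP c 0) => c_sgn.
    have : 0 <= - c * (M + r * M - c) by rewrite mulr_ge0 //; lra.
    nra.
  have : 0 <= c * (r * M - 3 * c) by rewrite mulr_ge0 //; lra.
  nra.
split=> //.
have : 3 * (r * M) < M - a.
  rewrite ltr_pdivrMr ?subr_gt0 in p_big; last lra.
  rewrite qE in p_big; nra.
lra.
Qed.

Lemma card_setI_setC (T : finType) (A B : {set T}) :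
  (#|A :&: B| + #|~: A :&: B|)%N = #|B|.
Proof. by rewrite (setIC A) (setIC (~: A)) -setDE cardsID. Qed.

Lemma card_le_setI3 (T : finType) (X A B C : {set T}) :
  (#|X| <= #|A :&: B :&: C| + #|~: A :&: X| + #|~: B :&: X| + #|~: C :&: X|)%N.
Proof.
have X_sub : X \subset A :&: B :&: C :|: ~: A :&: X :|: ~: B :&: X :|: ~: C :&: X.
  apply/subsetP => x xX; rewrite !inE xX.
  by case: (x \in A); case: (x \in B); case: (x \in C).
apply: leq_trans (subset_leq_card X_sub) _.
by do 2 (apply: leq_trans (leq_card_setU _ _).1 _; rewrite leq_add2r); exact: (leq_card_setU _ _).1.
Qed.

Section CutCost.
Variables (R : realFieldType) (T : finType) (V1 : {set T}) (p q : R).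
Local Notation cost := (cut_cost V1 p q).

Lemma cut_cost_blockC A : cut_cost (~: V1) p q A = cost A.
Proof.
apply: eq_bigr => u _; apply: eq_bigr => v _.
by rewrite /wgt !inE; case: (u \in V1); case: (v \in V1).
Qed.

Lemma induced_blockC Psi X : induced (~: V1) p q Psi X = induced V1 p q Psi X.
Proof. by apply/setP => A; rewrite !inE cut_cost_blockC. Qed.

Lemma is_tangle_blockC Psi a O : is_tangle (~: V1) p q Psi a O <-> is_tangle V1 p q Psi a O.
Proof.
have E := cut_cost_blockC.
split=> -[[hin hor] h3]; (split; [split | exact: h3]) => A.
- by rewrite -E; apply: hin.
- by rewrite -E; apply: hor.
- by rewrite E; apply: hin.
- by rewrite E; apply: hor.
Qed.

Lemma sum_wgt_out (A : {set T}) u : u \in A ->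
  \sum_(v in ~: A) wgt V1 p q u v =
    (if u \in V1 then p else q) * #|~: A :&: V1|%:R
  + (if u \in V1 then q else p) * #|~: A :\: V1|%:R.
Proof.
move=> uA; rewrite (big_setID V1) /= !mulr_natr -!sumr_const.
have uv v : v \notin A -> (u == v) = false.
  by apply: contraNF => /eqP <-.
congr (_ + _); apply: eq_bigr => v; rewrite !inE => /andP[];
  rewrite /wgt; [move=> /uv-> vV | move=> vV /uv->];
  by rewrite ?vV ?(negbTE vV); case: (u \in V1).
Qed.

Lemma cut_costE (A : {set T}) :
  cost A = p * (#|A :&: V1|%:R * #|~: A :&: V1|%:R + #|A :\: V1|%:R * #|~: A :\: V1|%:R)
         + q * (#|A :&: V1|%:R * #|~: A :\: V1|%:R + #|A :\: V1|%:R * #|~: A :&: V1|%:R).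
Proof.
rewrite /cut_cost (big_setID V1) /=.
rewrite (eq_bigr (fun=> p * #|~: A :&: V1|%:R + q * #|~: A :\: V1|%:R)); last first.
  by move=> u /setIP[uA uV]; rewrite sum_wgt_out // uV.
rewrite [X in _ + X](eq_bigr (fun=> q * #|~: A :&: V1|%:R + p * #|~: A :\: V1|%:R)); last first.
  by move=> u /setDP[uA uV]; rewrite sum_wgt_out // (negbTE uV).
by rewrite !sumr_const; ring.
Qed.

Lemma cut_costC A : cost (~: A) = cost A.
Proof. by rewrite !cut_costE setCK; ring. Qed.

End CutCost.

Section Tangles.
Variables (R : realFieldType) (T : finType) (V1 : {set T}) (p q Psi : R) (a : nat).
Hypothesis a_ge2 : (2 <= a)%N.
Local Notation cost := (cut_cost V1 p q).
Local Notation tangle := (is_tangle V1 p q Psi a).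

Lemma orientation_setC O (A : {set T}) :
  is_orientation V1 p q Psi O -> cost A <= Psi -> A \notin O -> ~: A \in O.
Proof. by case=> _ hor /hor; case: (A \in O); case: (~: A \in O). Qed.

Lemma tangle_card O (A : {set T}) : tangle O -> A \in O -> (a <= #|A|)%N.
Proof. by case=> _ h3 AO; have := h3 _ _ _ AO AO AO; rewrite !setIid. Qed.

Lemma tangle_setI3_neq0 O (A B C : {set T}) :
  tangle O -> A \in O -> B \in O -> C \in O -> A :&: B :&: C != set0.
Proof.
by case=> _ h3 AO BO CO; rewrite -card_gt0 (leq_trans _ (h3 _ _ _ AO BO CO)) // ltnW.
Qed.

Lemma tangle_set1 O z : tangle O -> [set z] \notin O.
Proof. by move=> tO; apply/negP => /(tangle_card tO); rewrite cards1 leqNgt a_ge2. Qed.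

(* For z in Z, the sides Z, ~: (Z :\ z) and ~: [set z] have empty intersection, so
   Z \in O forces Z :\ z \in O; iterating this reaches sets smaller than a. *)
Lemma tangle_notin_subsets O (X : {set T}) :
  tangle O -> (forall Z : {set T}, Z \subset X -> cost Z <= Psi) ->
  forall Z : {set T}, Z \subset X -> Z \notin O.
Proof.
move=> tO cheapX Z; move: {2}#|Z| (leqnn #|Z|) => n.
elim: n Z => [|n IH] Z Zn ZX; apply/negP => ZO; have Za := tangle_card tO ZO.
  by move: (leq_trans a_ge2 (leq_trans Za Zn)).
have [z zZ] : exists z, z \in Z.
  by apply/set0Pn; rewrite -card_gt0 (leq_trans _ Za) // ltnW.
have zX : [set z] \subset X by rewrite sub1set (subsetP ZX).
have ZzX : Z :\ z \subset X by rewrite (subset_trans _ ZX) ?subsetDl.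
have Zzn : (#|Z :\ z| <= n)%N by move: Zn; rewrite (cardsD1 z Z) zZ.
have := tangle_setI3_neq0 tO ZO
  (orientation_setC tO.1 (cheapX _ ZzX) (IH _ Zzn ZzX))
  (orientation_setC tO.1 (cheapX _ zX) (tangle_set1 z tO)).
suff -> : Z :&: ~: (Z :\ z) :&: ~: [set z] = set0 by rewrite eqxx.
by apply/setP => x; rewrite !inE; case: (x \in Z); case: (x != z).
Qed.
End Tangles.

Section BalancedBlocks.
Variables (R : realFieldType) (T : finType) (V1 : {set T}) (p q : R).
Hypothesis V1C : #|~: V1| = #|V1|.
Local Notation cost := (cut_cost V1 p q).
Local Notation M := (#|V1|%:R : R).
Local Notation k A := (#|A :&: V1|%:R : R).
Local Notation l A := (#|A :\: V1|%:R : R).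

Let l_ge0 A : 0 <= l A.
Proof. exact: ler0n. Qed.

Let k_le A : k A <= M.
Proof. by rewrite ler_nat subset_leq_card ?subsetIr. Qed.

Let l_le A : l A <= M.
Proof. by rewrite ler_nat -V1C subset_leq_card // setDE subsetIr. Qed.

Let kC A : k (~: A) = M - k A.
Proof. by rewrite -(card_setI_setC A V1) natrD addrC addKr. Qed.

Let lC A : l (~: A) = M - l A.
Proof. by rewrite -V1C !setDE -(card_setI_setC A (~: V1)) natrD addrC addKr. Qed.

Lemma cut_cost_balanced A :
  cost A = p * (k A * (M - k A) + l A * (M - l A)) + q * (k A * (M - l A) + l A * (M - k A)).
Proof. by rewrite cut_costE kC lC. Qed.

Lemma cut_cost_block : cost V1 = q * M ^+ 2.
Proof. by rewrite cut_cost_balanced setIid setDv cards0; ring. Qed.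

Lemma cut_cost_subset_le (Z A : {set T}) : 0 <= p -> 0 <= q ->
  Z \subset A :&: V1 -> (2 * #|A :&: V1| <= #|V1|)%N -> cost Z <= cost A.
Proof.
move=> p_ge0 q_ge0 ZA minority.
have ZV1 : Z \subset V1 := subset_trans ZA (subsetIr A V1).
rewrite !cut_cost_balanced (setIidPl ZV1) (_ : Z :\: V1 = set0) ?cards0; last first.
  by apply/eqP; rewrite setD_eq0.
have jk : #|Z|%:R <= k A :> R by rewrite ler_nat subset_leq_card.
have kM : 2 * k A <= M by rewrite -natrM ler_nat.
have := l_le A; have := l_ge0 A; move: jk kM.
set j := (#|Z|%:R : R); set kA := k A; set lA := l A => jk kM lA_ge0 lA_le.
have : 0 <= p * ((kA - j) * (M - kA - j)) by rewrite !mulr_ge0 //; lra.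
have : 0 <= p * (lA * (M - lA)) by rewrite !mulr_ge0 //; lra.
have : 0 <= q * ((kA - j) * M) by rewrite !mulr_ge0 //; lra.
have : 0 <= q * (lA * (M - 2 * kA)) by rewrite !mulr_ge0 //; lra.
lra.
Qed.

Section Threshold.
Variables (Psi : R) (a : nat).
Hypotheses (p_gt0 : 0 < p) (q_ge0 : 0 <= q) (q_le_p : q <= p) (a_ge2 : (2 <= a)%N).
Let r := q / p.
(* With n = 2 M and xi = 1 + r, the upper bound on Psi in the theorem is p c (M xi - c). *)
Let c := (M + r * M - a%:R) / 3.
Hypotheses (c_le : 2 * c <= M) (Psi_ge : q * M ^+ 2 <= Psi)
           (Psi_lt : Psi < p * (c * (M + r * M - c))).

Let qE : q = p * r. Proof. by rewrite /r mulrC divfK ?gt_eqF. Qed.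
Let r_ge0 : 0 <= r. Proof. exact: divr_ge0 q_ge0 (ltW p_gt0). Qed.
Let r_le1 : r <= 1. Proof. by rewrite /r ler_pdivrMr // mul1r. Qed.
Let rM_ge0 : 0 <= r * M. Proof. by rewrite mulr_ge0. Qed.
Let cE : 3 * c = M + r * M - a%:R. Proof. by rewrite /c mulrC divfK ?pnatr_eq0. Qed.

(* The two quantities are #|~: A| and the size of the symmetric difference of A and V1. *)
Lemma cheap_majority_side_near A : cost A <= Psi -> M <= 2 * k A ->
  (M - k A) + (M - l A) < c \/ (M - k A) + l A < c - r * M.
Proof.
move=> cheapA Mk; apply/orP; rewrite !ltNge -negb_and.
apply: contraTN cheapA => /andP[far1 far2].
rewrite -ltNge (lt_le_trans Psi_lt) // cut_cost_balanced qE -mulrA -mulrDr ler_pM2l //.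
exact: two_block_cost_ge r_ge0 r_le1 c_le Mk (k_le A) (l_ge0 A) (l_le A) far1 far2.
Qed.

Lemma cheap_cut_unbalanced A : cost A <= Psi -> (2 * #|A :&: V1|)%N != #|V1|.
Proof.
move=> cheapA; apply/eqP => half.
have Mk : M = 2 * k A by rewrite -natrM half.
have := l_le A; have := l_ge0 A; have := c_le; have := rM_ge0.
by case: (cheap_majority_side_near cheapA (_ : M <= 2 * k A)); lra.
Qed.

Lemma induced_orientation : is_orientation V1 p q Psi (induced V1 p q Psi V1).
Proof.
split=> [A | A cheapA]; first by rewrite inE => /andP[].
rewrite !inE cut_costC cheapA /=.
have := card_setI_setC A V1; have := cheap_cut_unbalanced cheapA.
by case: (ltnP #|V1| (2 * #|A :&: V1|)); case: (ltnP #|V1| (2 * #|~: A :&: V1|)); lia.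
Qed.

Lemma induced_setI3 A B C : A \in induced V1 p q Psi V1 -> B \in induced V1 p q Psi V1 ->
  C \in induced V1 p q Psi V1 -> (a <= #|A :&: B :&: C|)%N.
Proof.
have near X : X \in induced V1 p q Psi V1 ->
    [/\ 0 <= l X, 0 <= l (~: X) & k (~: X) + l (~: X) < c \/ k (~: X) + l X < c - r * M].
  rewrite inE => /andP[cheapX /ltnW]; rewrite -(ler_nat R) natrM => /(cheap_majority_side_near cheapX).
  by rewrite -kC -lC; split=> //; apply: l_ge0.
move=> /near[lA0 lA' nA] /near[lB0 lB' nB] /near[lC0 lC' nC].
have := card_le_setI3 V1 A B C; have := card_le_setI3 setT A B C.
rewrite !setIT cardsT -(cardsC V1) V1C -!(cardsID V1 (~: _)) -!(ler_nat R) !natrD.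
have := ler_piMl (ler0n R #|V1|) r_le1; have := cE; have := rM_ge0.
by case: nA; case: nB; case: nC; lra.
Qed.

Lemma induced_is_tangle : is_tangle V1 p q Psi a (induced V1 p q Psi V1).
Proof. by split; [exact: induced_orientation | exact: induced_setI3]. Qed.

Lemma block_in_induced : V1 \in induced V1 p q Psi V1.
Proof.
rewrite inE cut_cost_block Psi_ge setIid /=; apply: ltn_Pmull => //; rewrite lt0n.
apply: contraTneq Psi_lt => V1_0; rewrite -leNgt.
have := mulr_ge0 (ltW p_gt0) (sqr_ge0 c); move: Psi_ge; rewrite V1_0 mulr0n.
lra.
Qed.

Lemma tangle_eq_induced O : is_tangle V1 p q Psi a O -> V1 \in O -> O = induced V1 p q Psi V1.
Proof.
move=> tO V1O.
have sub : {subset O <= induced V1 p q Psi V1}.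
  move=> A AO; have cheapA := tO.1.1 A AO.
  rewrite inE cheapA ltnNge /=; apply/negP => minority.
  have cheap_sub (Z : {set T}) : Z \subset A :&: V1 -> cost Z <= Psi.
    by move=> ZA; rewrite (le_trans _ cheapA) // cut_cost_subset_le ?(ltW p_gt0).
  have AV1O : A :&: V1 \in O.
    apply: contraT => AV1nO.
    have := tangle_setI3_neq0 a_ge2 tO AO (orientation_setC tO.1 (cheap_sub _ (subxx _)) AV1nO) V1O.
    suff -> : A :&: ~: (A :&: V1) :&: V1 = set0 by rewrite eqxx.
    by apply/setP => x; rewrite !inE; case: (x \in A); case: (x \in V1).
  by have := tangle_notin_subsets a_ge2 tO cheap_sub (subxx _); rewrite AV1O.
apply/setP => A; apply/idP/idP => [/sub // | Aind].
have cheapA : cost A <= Psi by move: Aind; rewrite inE => /andP[].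
apply: contraT => AnO; have := induced_orientation.2 A cheapA.
by rewrite Aind (sub _ (orientation_setC tO.1 cheapA AnO)).
Qed.

Lemma tangle_containing_blockE O :
  is_tangle V1 p q Psi a O /\ V1 \in O <-> O = induced V1 p q Psi V1.
Proof.
split=> [[tO V1O] | ->]; first exact: tangle_eq_induced.
by split; [exact: induced_is_tangle | exact: block_in_induced].
Qed.

End Threshold.
End BalancedBlocks.

Theorem theorem2 (R : realFieldType) (T : finType) (V1 : {set T})
  (p q Psi : R) (a : nat) :
  ~~ odd #|T| ->
  #|V1| = #|~: V1| ->
  0 <= q -> q < p -> p <= 1 ->
  (2 <= a)%N ->
  p > 3 * q * (#|T|%:R) / (#|T|%:R - 2 * a%:R) ->
  let n : R := #|T|%:R in
  let xi : R := 1 + q / p in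
  q * (n / 2) ^+ 2 <= Psi ->
  Psi < n ^+ 2 / 4 * p *
          (3^-1 * xi * (xi - 2 * a%:R / n) - 9^-1 * (xi - 2 * a%:R / n) ^+ 2) ->
  induced V1 p q Psi V1 != induced V1 p q Psi (~: V1) /\
  (forall O : {set {set T}},
     is_tangle V1 p q Psi a O <->
     (O = induced V1 p q Psi V1 \/ O = induced V1 p q Psi (~: V1))).
Proof.
move=> _ V1C q_ge0 q_lt_p _ a_ge2 p_big n xi Psi_ge Psi_lt.
have TE : #|T|%:R = #|V1|%:R + #|V1|%:R :> R by rewrite -(cardsC V1) -V1C natrD.
rewrite {}/xi {}/n TE in p_big Psi_ge Psi_lt.
rewrite (_ : (_ + _) / 2 = #|V1|%:R) in Psi_ge; last by field.
have [c_le {}Psi_lt] := threshold_parameters (ler0n _ _) (ler0n _ _) q_ge0 q_lt_p p_big Psi_ge Psi_lt.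
have p_gt0 : 0 < p := le_lt_trans q_ge0 q_lt_p.
have blockE (W : {set T}) : #|W| = #|V1| -> #|~: W| = #|V1| -> forall O,
    is_tangle W p q Psi a O /\ W \in O <-> O = induced W p q Psi W.
  by move=> W_card WC_card; apply: tangle_containing_blockE; rewrite ?W_card ?WC_card // ltW.
have E1 := blockE V1 erefl (esym V1C).
have := blockE (~: V1) (esym V1C); rewrite setCK induced_blockC => /(_ erefl) E2.
have [V1_tangle V1_in] := (E1 _).2 erefl.
have [V2_tangle V2_in] := (E2 _).2 erefl.
have cheapV1 : cut_cost V1 p q V1 <= Psi by move: V1_in; rewrite inE => /andP[].
split.
  by apply/eqP => E; have := V1_tangle.1.2 V1 cheapV1; rewrite V1_in E V2_in.
move=> O; split=> [tO | [->|->]]; last 2 first.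
- exact: V1_tangle.
- exact/is_tangle_blockC.
case: (boolP (V1 \in O)) => [V1O | V1nO]; [left | right]; first exact/E1.
apply/E2; split; last exact: orientation_setC tO.1 cheapV1 V1nO.
exact: (is_tangle_blockC _ _ _ _ _ _).2 tO.
Qed.
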